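(* The diamond product $\diamond$ and the shuffle product $\sqcup\!\sqcup$ on $\mathfrak D$ are commutative.
   Context: Let $q$ be a prime power. Let $\Gamma=\{x_{n,\varepsilon}\}_{n\in\mathbb N,\varepsilon\in\mathbb F_q^*}$ be an alphabet with weights $w(x_{n,\varepsilon})=n$, $\langle\Gamma\rangle$ the set of words over $\Gamma$ (empty word $1$, juxtaposition = concatenation) and $\mathfrak D$ the $\mathbb F_q$-vector space with basis $\langle\Gamma\rangle$; write $x_n:=x_{n,1}$. For positive integers $r,s,j$ put $\Delta^j_{r,s}=(-1)^{r-1}\binom{j-1}{r-1}+(-1)^{s-1}\binom{j-1}{s-1}$ if $(q-1)\mid j$ and $0$ otherwise. The bilinear products $\diamond,\sqcup\!\sqcup$ on $\mathfrak D$ are defined recursively by $1\diamond\mathfrak a=\mathfrak a\diamond1=\mathfrak a$, $1\sqcup\!\sqcup\mathfrak a=\mathfrak a\sqcup\!\sqcup1=\mathfrak a$ and, for nonempty words $\mathfrak a=x_{a,\alpha}\mathfrak a_-$, $\mathfrak b=x_{b,\beta}\mathfrak b_-$: $\mathfrak a\diamond\mathfrak b=x_{a+b,\alpha\beta}(\mathfrak a_-\sqcup\!\sqcup\mathfrak b_-)+\sum_{i+j=a+b}\Delta^j_{a,b}x_{i,\alpha\beta}(x_j\sqcup\!\sqcup(\mathfrak a_-\sqcup\!\sqcup\mathfrak b_-))$ and $\mathfrak a\sqcup\!\sqcup\mathfrak b=x_{a,\alpha}(\mathfrak a_-\sqcup\!\sqcup\mathfrak b)+x_{b,\beta}(\mathfrak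 a\sqcup\!\sqcup\mathfrak b_-)+\mathfrak a\diamond\mathfrak b$ ($i,j$ positive integers). *)

From mathcomp Require Import all_boot all_algebra all_field.
Set Implicit Arguments. Unset Strict Implicit. Unset Printing Implicit Defensive.
Import GRing.Theory.
Local Open Scope ring_scope.

Section DDefs.
Variable F : finFieldType.   (* F = F_q, q = #|F| (a prime power) *)

(* letter x_{n,eps} is the pair (n, eps); valid letters have n >= 1, eps <> 0 *)
Definition letter := (nat * F)%type.
Definition word := seq letter.
(* an element of the free F-vector space D on words, as a formal finite
   linear combination; two such are equal in D iff their coefficients agree *)
Definition Dsp := seq (F * word).

Definition qF : nat := #|F|.

Definition valid_letter (x : letter) : bool := (0 < x.1)%N && (x.2 != 0).
Definition valid_word (w : word) : bool := all valid_letter w.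
Definition valid_D (A : Dsp) : bool := all (fun p => valid_word p.2) A.

Definition coef (A : Dsp) (w : word) : F := \sum_(p <- A | p.2 == w) p.1.

Definition scaleD (k : F) (A : Dsp) : Dsp := [seq (k * p.1, p.2) | p <- A].
Definition consD (x : letter) (A : Dsp) : Dsp := [seq (p.1, x :: p.2) | p <- A].
Definition unitD (w : word) : Dsp := [:: (1, w)].
Definition bilin (f : word -> word -> Dsp) (A B : Dsp) : Dsp :=
  flatten [seq scaleD (a.1 * b.1) (f a.2 b.2) | a <- A, b <- B].

Definition Delta (r s j : nat) : F :=
  if (qF.-1 %| j)%N then
    (-1) ^+ r.-1 * ('C(j.-1, r.-1))%:R + (-1) ^+ s.-1 * ('C(j.-1, s.-1))%:R
  else 0.

(* one unfolding of the diamond product, given a shuffle product sh on words *)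
Definition diaF (sh : word -> word -> Dsp) (u v : word) : Dsp :=
  match u with
  | [::] => unitD v
  | (a, al) :: u' =>
    match v with
    | [::] => unitD u
    | (b, be) :: v' =>
      let c := sh u' v' in
      consD ((a + b)%N, al * be) c ++
      flatten [seq scaleD (Delta a b j)
                 (consD ((a + b - j)%N, al * be)
                    (bilin sh (unitD [:: (j, 1)]) c))
              | j <- iota 1 (a + b).-1]
    end
  end.

(* shuffle product with fuel n (correct whenever n > size u + size v) *)
Fixpoint shF (n : nat) (u v : word) : Dsp :=
  match n with
  | 0 => [::]
  | n'.+1 =>
    match u with
    | [::] => unitD v
    | x :: u' =>
      match v with
      | [::] => unitD u
      | y :: v' =>
        consD x (shF n' u' v) ++ consD y (shF n' u v') ++ diaF (shF n') u v
      end
    end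
  end.

Definition shuffle_w (u v : word) : Dsp := shF (size u + size v).+1 u v.
Definition diamond_w (u v : word) : Dsp := diaF (shF (size u + size v)) u v.

Definition shuffleD : Dsp -> Dsp -> Dsp := bilin shuffle_w.
Definition diamondD : Dsp -> Dsp -> Dsp := bilin diamond_w.

End DDefs.

From mathcomp Require Import all_boot all_algebra all_field.
Set Implicit Arguments. Unset Strict Implicit. Unset Printing Implicit Defensive.
Import GRing.Theory.

(* Every clause in the recursive definitions of the two products is symmetric
   under exchanging the arguments: the shuffle clause adds the two "first
   letter" terms and the diamond term, and the diamond clause uses the letter
   x_{a+b,αβ} and the coefficients Δ^j_{a,b} = Δ^j_{b,a}, applied to shuffles
   of the tails.  So induction on the recursion depth gives commutativity on
   words, and bilinear extension preserves it. *)

Section Commutativity.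
Variable F : finFieldType.
Local Open Scope ring_scope.

Definition eqD (A B : Dsp F) : Prop := forall w, coef A w = coef B w.

Definition evalD (g : word F -> F) (A : Dsp F) : F := \sum_(p <- A) p.1 * g p.2.

Lemma coef_nil w : coef ([::] : Dsp F) w = 0.
Proof. by rewrite /coef big_nil. Qed.

Lemma coef_cons (p : F * word F) (A : Dsp F) w :
  coef (p :: A) w = (if p.2 == w then p.1 else 0) + coef A w.
Proof. by rewrite /coef big_cons; case: ifP; rewrite ?add0r. Qed.

Lemma coef_cat (A B : Dsp F) w : coef (A ++ B) w = coef A w + coef B w.
Proof. by rewrite /coef big_cat. Qed.

Lemma coef_flatten (L : seq (Dsp F)) w :
  coef (flatten L) w = \sum_(A <- L) coef A w.
Proof.
elim: L => [|A L IH]; first by rewrite big_nil coef_nil.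
by rewrite coef_cat IH big_cons.
Qed.

Lemma coef_scaleD k (A : Dsp F) w : coef (scaleD k A) w = k * coef A w.
Proof.
elim: A => [|p A IH]; first by rewrite coef_nil mulr0.
by rewrite /= !coef_cons IH mulrDr /=; case: ifP; rewrite ?mulr0.
Qed.

Lemma coef_consD_nil x (A : Dsp F) : coef (consD x A) [::] = 0.
Proof. by rewrite /coef big_map big_pred0. Qed.

Lemma coef_consD_cons x (A : Dsp F) y w :
  coef (consD x A) (y :: w) = if y == x then coef A w else 0.
Proof.
elim: A => [|p A IH]; first by rewrite /= !coef_nil; case: ifP.
rewrite /= !coef_cons -/(consD x A) IH /= eqseq_cons eq_sym.
by case: (y == x); rewrite /= ?add0r.
Qed.

Lemma evalD_coef g (A : Dsp F) (S : seq (word F)) :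
  uniq S -> {subset map snd A <= S} ->
  evalD g A = \sum_(v <- S) coef A v * g v.
Proof.
move=> uniqS; elim: A => [|p A IH] AS.
  by rewrite /evalD big_nil big1 // => v _; rewrite coef_nil mul0r.
rewrite /evalD big_cons -/(evalD g A) IH; last first.
  by move=> v Av; apply: AS; rewrite inE Av orbT.
under [in RHS]eq_bigr => v _ do rewrite coef_cons mulrDl.
rewrite big_split /=; congr (_ + _).
have pS : p.2 \in S by apply: AS; rewrite inE eqxx.
rewrite (bigD1_seq p.2) //= eqxx big1 ?addr0 // => v /negbTE.
by rewrite eq_sym => ->; rewrite mul0r.
Qed.

Lemma eqD_evalD g (A B : Dsp F) : eqD A B -> evalD g A = evalD g B.
Proof.
move=> eqAB; set S := undup (map snd (A ++ B)).
rewrite !(@evalD_coef g _ S) ?undup_uniq //.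
- by apply: eq_bigr => v _; rewrite eqAB.
- by move=> v Bv; rewrite mem_undup map_cat mem_cat Bv orbT.
- by move=> v Av; rewrite mem_undup map_cat mem_cat Av.
Qed.

Lemma coef_bilin f (A B : Dsp F) w :
  coef (bilin f A B) w = evalD (fun u => evalD (fun v => coef (f u v) w) B) A.
Proof.
rewrite /bilin /evalD; elim: A => [|a A IH]; first by rewrite big_nil coef_nil.
rewrite /= flatten_cat coef_cat IH big_cons coef_flatten big_map mulr_sumr.
by congr (_ + _); apply: eq_bigr => b _; rewrite coef_scaleD mulrA.
Qed.

Lemma eqD_cat (A A' B B' : Dsp F) :
  eqD A A' -> eqD B B' -> eqD (A ++ B) (A' ++ B').
Proof. by move=> eqA eqB w; rewrite !coef_cat eqA eqB. Qed.

Lemma eqD_consD x (A B : Dsp F) : eqD A B -> eqD (consD x A) (consD x B).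
Proof. by move=> eqAB [|y w]; rewrite ?coef_consD_nil ?coef_consD_cons ?eqAB. Qed.

Lemma eqD_bilinr f (A B B' : Dsp F) :
  eqD B B' -> eqD (bilin f A B) (bilin f A B').
Proof.
move=> eqB w; rewrite !coef_bilin; apply: eq_bigr => a _.
by rewrite (eqD_evalD _ eqB).
Qed.

Lemma bilin_comm f : (forall u v, eqD (f u v) (f v u)) ->
  forall A B : Dsp F, eqD (bilin f A B) (bilin f B A).
Proof.
move=> fC A B w; rewrite !coef_bilin /evalD.
under eq_bigr => a _ do rewrite mulr_sumr.
rewrite exchange_big; apply: eq_bigr => b _; rewrite mulr_sumr.
by apply: eq_bigr => a _; rewrite fC !mulrA [b.1 * _]mulrC.
Qed.

Lemma DeltaC a b j : Delta F a b j = Delta F b a j.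
Proof. by rewrite /Delta addrC. Qed.

Lemma diaF_comm sh : (forall u v, eqD (sh u v) (sh v u)) ->
  forall u v : word F, eqD (diaF sh u v) (diaF sh v u).
Proof.
move=> shC [|[a al] u] [|[b be] v] //=.
rewrite [(b + a)%N]addnC [be * al]mulrC.
apply: eqD_cat; first exact/eqD_consD/shC.
move=> w; rewrite !coef_flatten !big_map; apply: eq_bigr => j _.
by rewrite !coef_scaleD DeltaC; congr (_ * _); apply/eqD_consD/eqD_bilinr/shC.
Qed.

Lemma shF_cons n x y (u v : word F) :
  shF n.+1 (x :: u) (y :: v) =
  consD x (shF n u (y :: v)) ++ consD y (shF n (x :: u) v) ++
  diaF (shF n) (x :: u) (y :: v).
Proof. by []. Qed.

Lemma shF_comm n (u v : word F) : eqD (shF n u v) (shF n v u).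
Proof.
elim: n u v => [|n IH] [|x u] [|y v] //.
rewrite !shF_cons !catA; apply: eqD_cat.
  by move=> w; rewrite !coef_cat addrC; congr (_ + _); apply/eqD_consD/IH.
exact: (diaF_comm IH (x :: u) (y :: v)).
Qed.

End Commutativity.

Theorem proposition5p1 (F : finFieldType) (A B : Dsp F) :
  valid_D A -> valid_D B ->
  (forall w : word F, coef (diamondD A B) w = coef (diamondD B A) w) /\
  (forall w : word F, coef (shuffleD A B) w = coef (shuffleD B A) w).
Proof.
(* Commutativity holds for arbitrary letters, valid or not. *)
move=> _ _; split; apply: bilin_comm => u v.
- rewrite /diamond_w addnC; exact: (diaF_comm (shF_comm _) u v).
- by rewrite /shuffle_w addnC; apply: shF_comm.
Qed.
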